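(* Let $\tau\geq 1$ be a constant and let $u\neq v$ be points in the plane. Consider points $w$ with $\angle wuv\in[0,\pi/2)$, $\angle wvu\in[0,\pi/2)$ and $\tau|vw|<|uv|$, and the ratio $$\frac{|uw|}{|uv|-\tau|vw|}.$$ Then: (1) if $w$ is restricted to a compact segment of a circular arc centered at $u$, the ratio is maximized when $|vw|$ is largest; (2) if $w$ is restricted to a compact segment of a ray emanating from $v$, the ratio is maximized when $|vw|$ is largest; (3) if $w$ is restricted to a compact segment of a ray emanating from $u$, the maximum of the ratio is achieved at the position of $w$ making $|uw|$ largest or at the position making $|uw|$ smallest. *)

From Stdlib Require Import Reals Lra.
Open Scope R_scope.

Definition point := (R * R)%type.

Definition pdist (p q : point) : R :=
  sqrt ((fst p - fst q) ^ 2 + (snd p - snd q) ^ 2).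

Definition dot_at (a b c : point) : R :=
  (fst a - fst b) * (fst c - fst b) + (snd a - snd b) * (snd c - snd b).

Definition angle (a b c : point) : R :=
  acos (dot_at a b c / (pdist a b * pdist c b)).

Definition admissible (tau : R) (u v w : point) : Prop :=
  0 <= angle w u v < PI / 2 /\
  0 <= angle w v u < PI / 2 /\
  tau * pdist v w < pdist u v.

Definition ratio (tau : R) (u v w : point) : R :=
  pdist u w / (pdist u v - tau * pdist v w).

Definition on_circle (c : point) (r theta : R) : point :=
  (fst c + r * cos theta, snd c + r * sin theta).

Definition on_ray (c d : point) (t : R) : point :=
  (fst c + t * fst d, snd c + t * snd d).

(* Only the condition [tau |vw| < |uv|] of admissibility matters: it makes the
   denominator positive.
   Along a line, distances to a fixed point are convex functions of the
   parameter, so along a segment the ratio is a quotient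
   (convex or linear) / (affine or concave), which is bounded by the larger of
   its endpoint values (mediant inequality).  On a ray from [v] one endpoint may
   be taken to be [v] itself, where the ratio is [1]; and the ratio is at least
   [1] everywhere by the triangle inequality, since [tau >= 1]. *)
From Stdlib Require Import Reals Lra.
Open Scope R_scope.

Lemma sqrt_sum_sq_triangle a1 a2 b1 b2 :
  sqrt ((a1 + b1) ^ 2 + (a2 + b2) ^ 2) <= sqrt (a1 ^ 2 + a2 ^ 2) + sqrt (b1 ^ 2 + b2 ^ 2).
Proof.
  pose proof (sqrt_cauchy a1 a2 b1 b2) as Hcauchy; unfold Rsqr in Hcauchy.
  pose proof (sqrt_pos (a1 ^ 2 + a2 ^ 2)). pose proof (sqrt_pos (b1 ^ 2 + b2 ^ 2)).
  rewrite <- (sqrt_square (sqrt (a1 ^ 2 + a2 ^ 2) + sqrt (b1 ^ 2 + b2 ^ 2))) by lra.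
  apply sqrt_le_1_alt.
  assert (Ha : sqrt (a1 ^ 2 + a2 ^ 2) * sqrt (a1 ^ 2 + a2 ^ 2) = a1 ^ 2 + a2 ^ 2)
    by (apply sqrt_sqrt; nra).
  assert (Hb : sqrt (b1 ^ 2 + b2 ^ 2) * sqrt (b1 ^ 2 + b2 ^ 2) = b1 ^ 2 + b2 ^ 2)
    by (apply sqrt_sqrt; nra).
  replace (a1 * a1 + a2 * a2) with (a1 ^ 2 + a2 ^ 2) in Hcauchy by ring.
  replace (b1 * b1 + b2 * b2) with (b1 ^ 2 + b2 ^ 2) in Hcauchy by ring.
  lra.
Qed.

Lemma sqrt_sum_sq_scale k a1 a2 :
  0 <= k -> sqrt ((k * a1) ^ 2 + (k * a2) ^ 2) = k * sqrt (a1 ^ 2 + a2 ^ 2).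
Proof.
  intro Hk.
  replace ((k * a1) ^ 2 + (k * a2) ^ 2) with (k * k * (a1 ^ 2 + a2 ^ 2)) by ring.
  rewrite sqrt_mult_alt by nra. now rewrite sqrt_square.
Qed.

Lemma pdist_nonneg p q : 0 <= pdist p q.
Proof. apply sqrt_pos. Qed.

Lemma pdist_sym p q : pdist p q = pdist q p.
Proof. unfold pdist; f_equal; ring. Qed.

Lemma pdist_triangle p q r : pdist p r <= pdist p q + pdist q r.
Proof.
  unfold pdist.
  replace (fst p - fst r) with ((fst p - fst q) + (fst q - fst r)) by ring.
  replace (snd p - snd r) with ((snd p - snd q) + (snd q - snd r)) by ring.
  apply sqrt_sum_sq_triangle.
Qed.

Lemma pdist_on_circle c r theta : 0 <= r -> pdist c (on_circle c r theta) = r.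
Proof.
  intro Hr. unfold pdist, on_circle; cbn [fst snd].
  replace ((fst c - (fst c + r * cos theta)) ^ 2 + (snd c - (snd c + r * sin theta)) ^ 2)
    with (r * r * (Rsqr (sin theta) + Rsqr (cos theta))) by (unfold Rsqr; ring).
  rewrite sin2_cos2, Rmult_1_r. now apply sqrt_square.
Qed.

Lemma on_ray0 c d : on_ray c d 0 = c.
Proof. destruct c; unfold on_ray; simpl; f_equal; ring. Qed.

Lemma pdist_on_ray c d t :
  0 <= t -> pdist c (on_ray c d t) = t * sqrt (fst d ^ 2 + snd d ^ 2).
Proof.
  intro Ht. unfold pdist, on_ray; cbn [fst snd].
  replace ((fst c - (fst c + t * fst d)) ^ 2 + (snd c - (snd c + t * snd d)) ^ 2)
    with ((t * fst d) ^ 2 + (t * snd d) ^ 2) by ring.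
  now apply sqrt_sum_sq_scale.
Qed.

Lemma norm_dir_pos (d : point) : d <> (0, 0) -> 0 < sqrt (fst d ^ 2 + snd d ^ 2).
Proof.
  intro Hd. apply sqrt_lt_R0. destruct d as [d1 d2]; simpl.
  destruct (Req_dec d1 0), (Req_dec d2 0); subst; [now contradiction Hd | nra ..].
Qed.

Lemma le_of_pdist_on_ray_le c d s t :
  d <> (0, 0) -> 0 <= s -> 0 <= t -> pdist c (on_ray c d s) <= pdist c (on_ray c d t) -> s <= t.
Proof.
  intros Hd Hs Ht. rewrite !pdist_on_ray by assumption.
  pose proof (norm_dir_pos d Hd). nra.
Qed.

Lemma pdist_on_ray_monotone c d s t :
  0 <= s <= t -> pdist c (on_ray c d s) <= pdist c (on_ray c d t).
Proof.
  intro Hst. rewrite !pdist_on_ray by lra.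
  apply Rmult_le_compat_r; [apply sqrt_pos | lra].
Qed.

Lemma pdist_on_ray_convex q c d s t1 t2 : 0 <= s <= 1 ->
  pdist q (on_ray c d ((1 - s) * t1 + s * t2)) <=
  (1 - s) * pdist q (on_ray c d t1) + s * pdist q (on_ray c d t2).
Proof.
  intro Hs. unfold pdist, on_ray; cbn [fst snd].
  replace (fst q - (fst c + ((1 - s) * t1 + s * t2) * fst d)) with
    ((1 - s) * (fst q - (fst c + t1 * fst d)) + s * (fst q - (fst c + t2 * fst d))) by ring.
  replace (snd q - (snd c + ((1 - s) * t1 + s * t2) * snd d)) with
    ((1 - s) * (snd q - (snd c + t1 * snd d)) + s * (snd q - (snd c + t2 * snd d))) by ring.
  rewrite <- (sqrt_sum_sq_scale (1 - s)), <- (sqrt_sum_sq_scale s) by lra.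
  apply sqrt_sum_sq_triangle.
Qed.

Lemma interval_convex_comb a b t :
  a <= t <= b -> exists s, 0 <= s <= 1 /\ t = (1 - s) * a + s * b.
Proof.
  intro Ht. destruct (Req_dec a b) as [<- | Hab].
  - exists 0. split; [lra | ring_simplify; lra].
  - exists ((t - a) / (b - a)). split.
    + split; [apply Rmult_le_pos; [lra | left; apply Rinv_0_lt_compat; lra] |].
      apply Rmult_le_reg_r with (b - a); [lra |]. field_simplify; lra.
    + field. lra.
Qed.

Lemma mediant_le_Rmax s x1 x2 y1 y2 : 0 <= s <= 1 -> 0 < y1 -> 0 < y2 ->
  ((1 - s) * x1 + s * x2) / ((1 - s) * y1 + s * y2) <= Rmax (x1 / y1) (x2 / y2).
Proof.
  intros Hs Hy1 Hy2.
  set (M := Rmax (x1 / y1) (x2 / y2)).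
  assert (Hx1 : x1 <= M * y1).
  { replace x1 with (x1 / y1 * y1) by (field; lra).
    apply Rmult_le_compat_r; [lra | apply Rmax_l]. }
  assert (Hx2 : x2 <= M * y2).
  { replace x2 with (x2 / y2 * y2) by (field; lra).
    apply Rmult_le_compat_r; [lra | apply Rmax_r]. }
  assert (Hy : 0 < (1 - s) * y1 + s * y2) by nra.
  apply Rmult_le_reg_r with ((1 - s) * y1 + s * y2); [assumption |].
  unfold Rdiv. rewrite Rmult_assoc, Rinv_l by lra. nra.
Qed.

Lemma div_le_Rmax_of_convex s n y x1 x2 y1 y2 :
  0 <= s <= 1 -> 0 <= n -> 0 < y1 -> 0 < y2 ->
  n <= (1 - s) * x1 + s * x2 -> (1 - s) * y1 + s * y2 <= y ->
  n / y <= Rmax (x1 / y1) (x2 / y2).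
Proof.
  intros Hs Hn Hy1 Hy2 Hnx Hy.
  assert (Hcomb : 0 < (1 - s) * y1 + s * y2) by nra.
  apply Rle_trans with (((1 - s) * x1 + s * x2) / ((1 - s) * y1 + s * y2));
    [| now apply mediant_le_Rmax].
  apply Rle_trans with (n / ((1 - s) * y1 + s * y2)).
  - unfold Rdiv. apply Rmult_le_compat_l; [assumption |].
    apply Rinv_le_contravar; assumption.
  - unfold Rdiv. apply Rmult_le_compat_r; [left; apply Rinv_0_lt_compat |]; lra.
Qed.

Section Ratio.

Variables (tau : R) (u v : point).
Hypothesis Htau : 1 <= tau.

Lemma ratio_ge_1 w : tau * pdist v w < pdist u v -> 1 <= ratio tau u v w.
Proof.
  intro Hw. unfold ratio.
  pose proof (pdist_triangle u w v) as Htri. rewrite (pdist_sym w v) in Htri.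
  pose proof (pdist_nonneg v w).
  assert (pdist v w <= tau * pdist v w) by nra.
  apply Rmult_le_reg_r with (pdist u v - tau * pdist v w); [lra |].
  unfold Rdiv. rewrite Rmult_assoc, Rinv_l; lra.
Qed.

Lemma ratio_le_of_eq_pdist_u w w' :
  pdist u w = pdist u w' -> tau * pdist v w' < pdist u v ->
  pdist v w <= pdist v w' -> ratio tau u v w <= ratio tau u v w'.
Proof.
  intros Heq Hw' Hvw. unfold ratio. rewrite Heq.
  unfold Rdiv. apply Rmult_le_compat_l; [apply pdist_nonneg |].
  apply Rinv_le_contravar; [lra |]. apply Rplus_le_compat_l, Ropp_le_contravar.
  apply Rmult_le_compat_l; lra.
Qed.

Lemma ratio_on_ray_from_v_le d t t0 : 0 <= t <= t0 ->
  tau * pdist v (on_ray v d t0) < pdist u v ->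
  ratio tau u v (on_ray v d t) <= ratio tau u v (on_ray v d t0).
Proof.
  intros Ht Hw0.
  destruct (interval_convex_comb 0 t0 t ltac:(lra)) as [s [Hs ->]].
  pose proof (ratio_ge_1 _ Hw0) as Hge1.
  assert (HL : 0 < pdist u v) by (pose proof (pdist_nonneg v (on_ray v d t0)); nra).
  unfold ratio at 1.
  eapply Rle_trans.
  - apply (div_le_Rmax_of_convex s _ _ (pdist u v) (pdist u (on_ray v d t0))
             (pdist u v) (pdist u v - tau * pdist v (on_ray v d t0))); try lra.
    + apply pdist_nonneg.
    + pose proof (pdist_on_ray_convex u v d s 0 t0 Hs) as Hconv.
      now rewrite on_ray0 in Hconv.
    + rewrite !pdist_on_ray by nra. lra.
  - replace (pdist u v / pdist u v) with 1 by (field; lra).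
    apply Rmax_lub; [assumption | apply Rle_refl].
Qed.

Lemma ratio_on_ray_from_u_le_Rmax d a b t : a <= t <= b ->
  tau * pdist v (on_ray u d a) < pdist u v -> tau * pdist v (on_ray u d b) < pdist u v ->
  ratio tau u v (on_ray u d t) <=
  Rmax (ratio tau u v (on_ray u d a)) (ratio tau u v (on_ray u d b)).
Proof.
  intros Ht Hwa Hwb.
  destruct (interval_convex_comb a b t Ht) as [s [Hs ->]].
  pose proof (pdist_on_ray_convex v u d s a b Hs) as Hconv.
  unfold ratio. apply (div_le_Rmax_of_convex s); try lra.
  - apply pdist_nonneg.
  - now apply pdist_on_ray_convex.
  - nra.
Qed.

End Ratio.

Theorem lemma3 (tau : R) (u v : point) (Htau : 1 <= tau) (Huv : u <> v) :
  (* (1) compact arc of a circle centred at u *)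
  (forall (r th1 th2 : R), 0 < r -> th1 <= th2 ->
     (forall th, th1 <= th <= th2 -> admissible tau u v (on_circle u r th)) ->
     forall th0, th1 <= th0 <= th2 ->
       (forall th, th1 <= th <= th2 ->
          pdist v (on_circle u r th) <= pdist v (on_circle u r th0)) ->
       forall th, th1 <= th <= th2 ->
          ratio tau u v (on_circle u r th) <= ratio tau u v (on_circle u r th0))
  /\
  (* (2) compact segment of a ray emanating from v *)
  (forall (d : point) (a b : R), d <> (0, 0) -> 0 <= a -> a <= b ->
     (forall t, a <= t <= b -> admissible tau u v (on_ray v d t)) ->
     forall t0, a <= t0 <= b ->
       (forall t, a <= t <= b -> pdist v (on_ray v d t) <= pdist v (on_ray v d t0)) ->
       forall t, a <= t <= b ->
          ratio tau u v (on_ray v d t) <= ratio tau u v (on_ray v d t0))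
  /\
  (* (3) compact segment of a ray emanating from u *)
  (forall (d : point) (a b : R), d <> (0, 0) -> 0 <= a -> a <= b ->
     (forall t, a <= t <= b -> admissible tau u v (on_ray u d t)) ->
     exists t0, a <= t0 <= b /\
       ((forall t, a <= t <= b -> pdist u (on_ray u d t) <= pdist u (on_ray u d t0)) \/
        (forall t, a <= t <= b -> pdist u (on_ray u d t0) <= pdist u (on_ray u d t))) /\
       (forall t, a <= t <= b ->
          ratio tau u v (on_ray u d t) <= ratio tau u v (on_ray u d t0))).
Proof.
  split; [| split].
  - intros r th1 th2 Hr _ Hadm th0 Hth0 Hmax th Hth.
    apply (ratio_le_of_eq_pdist_u tau u v Htau); [| apply Hadm; lra | auto].
    rewrite !pdist_on_circle; lra.
  - intros d a b Hd Ha _ Hadm t0 Ht0 Hmax t Ht.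
    apply (ratio_on_ray_from_v_le tau u v Htau); [| apply Hadm; lra].
    split; [lra |]. apply (le_of_pdist_on_ray_le v d); auto; lra.
  - intros d a b _ Ha Hab Hadm.
    assert (Hbound := fun t Ht => ratio_on_ray_from_u_le_Rmax tau u v Htau d a b t Ht
                        (proj2 (proj2 (Hadm a ltac:(lra)))) (proj2 (proj2 (Hadm b ltac:(lra))))).
    destruct (Rle_lt_dec (ratio tau u v (on_ray u d b)) (ratio tau u v (on_ray u d a)))
      as [Hba | Hab'].
    + exists a. repeat split; try lra.
      * right. intros t Ht. apply pdist_on_ray_monotone; lra.
      * intros t Ht. rewrite <- (Rmax_left _ _ Hba). now apply Hbound.
    + exists b. repeat split; try lra.
      * left. intros t Ht. apply pdist_on_ray_monotone; lra.
      * intros t Ht. rewrite <- (Rmax_right _ _ (Rlt_le _ _ Hab')). now apply Hbound.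
Qed.
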